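(* For any $x,y\in\mathbb{R}^d$, $$\|x\odot\texttt{FLT}_\alpha(x)\|_1-\|x\odot\texttt{FLT}_\alpha(y)\|_1\le2\|x-y\|_1.$$
   Context: The coordinates of $\mathbb{R}^d$ are partitioned into $B$ blocks of sizes $d_1,\dots,d_B$ with $\sum_kd_k=d$; write $z=(z^{(1)},\dots,z^{(B)})$, $z^{(k)}\in\mathbb{R}^{d_k}$. Fix $\alpha\%\in(0,1]$. The top-$\alpha\%$ filter $\texttt{FLT}_\alpha(z)\in\{0,1\}^d$ is defined blockwise: in block $k$ it equals $1$ exactly on a set $S_k$ of $\lceil d_k\cdot\alpha\%\rceil$ indices whose absolute values $|z^{(k)}_i|$ rank within the top-$\alpha\%$ of the block (ties broken in favour of smaller indices), and $0$ elsewhere. $\odot$ is the entrywise product. *)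

From HB Require Import structures.
From mathcomp Require Import all_boot all_order all_algebra.
Set Implicit Arguments. Unset Strict Implicit. Unset Printing Implicit Defensive.
Import Order.TTheory GRing.Theory Num.Theory.
Local Open Scope ring_scope.

(* Coordinates of R^d, partitioned into B blocks of sizes d k (k : 'I_B):
   a coordinate is a pair (k, i) with i : 'I_(d k); so d = \sum_k d k. *)
Notation bcoord d := {k : 'I__ & 'I_(d k)}.

Definition block (R : Type) B (d : 'I_B -> nat) (z : bcoord d -> R) (k : 'I_B)
  : 'I_(d k) -> R := fun i => z (Tagged (fun k => 'I_(d k)) i).

Arguments block [R B d] z k _.

Definition ranked_before (R : numDomainType) n (v : 'I_n -> R) (j i : 'I_n) : bool :=
  (`|v i| < `|v j|) || ((`|v j| == `|v i|) && (j < i)%N).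

(* rank of i in the block (0 = largest). *)
Definition rank (R : numDomainType) n (v : 'I_n -> R) (i : 'I_n) : nat :=
  #|[set j | ranked_before v j i]|.

Definition nkeep (R : archiRealFieldType) (alpha : R) (n : nat) : nat :=
  `|Num.ceil (n%:R * alpha)|%N.

Definition FLT (R : archiRealFieldType) (alpha : R) B (d : 'I_B -> nat)
  (z : bcoord d -> R) : bcoord d -> R :=
  fun p => ((rank (block z (tag p)) (tagged p) < nkeep alpha (d (tag p)))%N : bool)%:R.

Definition hadamard (R : ringType) B (d : 'I_B -> nat) (x y : bcoord d -> R)
  : bcoord d -> R := fun p => x p * y p.

Definition norm1 (R : numDomainType) B (d : 'I_B -> nat) (x : bcoord d -> R) : R :=
  \sum_(p : bcoord d) `|x p|.

(* In every block the filter keeps the set [S_z] of the [k] coordinates ranked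
   first by [|z|]. All these sets have size [k], and [S_y] maximises the sum of
   [|y|] among sets of that size. Hence, with [D = ||x - y||_1],
   [sum_(S_x) |x| <= sum_(S_x) |y| + D <= sum_(S_y) |y| + D <= sum_(S_y) |x| + 2 D].
   This holds for every [k]. *)

From HB Require Import structures.
From mathcomp Require Import all_boot all_order all_algebra.
Import Order.TTheory GRing.Theory Num.Theory.
Local Open Scope ring_scope.

Set Implicit Arguments.
Unset Strict Implicit.

Section Ranking.
Variables (R : numDomainType) (n : nat) (v : 'I_n -> R).

Lemma ranked_before_trans l j i :
  ranked_before v l j -> ranked_before v j i -> ranked_before v l i.
Proof.
rewrite /ranked_before => /orP[lt_lj|/andP[/eqP eq_lj lt_lj]].
- case/orP=> [lt_ji|/andP[/eqP eq_ji _]]; first by rewrite (lt_trans lt_ji lt_lj).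
  by rewrite -eq_ji lt_lj.
- case/orP=> [lt_ji|/andP[/eqP eq_ji lt_ji]]; first by rewrite eq_lj lt_ji.
  by rewrite eq_lj eq_ji eqxx (ltn_trans lt_lj lt_ji) orbT.
Qed.

Lemma ranked_before_irr i : ~~ ranked_before v i i.
Proof. by rewrite /ranked_before ltxx ltnn andbF. Qed.

Lemma ranked_before_total i j :
  i != j -> ranked_before v j i || ranked_before v i j.
Proof.
move=> neq_ij; rewrite /ranked_before.
case: (real_ltgtP (normr_real (v i)) (normr_real (v j))) => //= _.
by case: ltngtP => // /val_inj eq_ji; rewrite eq_ji eqxx in neq_ij.
Qed.

Lemma rank_lt j i : ranked_before v j i -> (rank v j < rank v i)%N.
Proof.
move=> ji; apply/proper_card/properP; split.
  by apply/subsetP => l; rewrite !inE => /ranked_before_trans; apply.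
by exists j; rewrite !inE ?ji ?ranked_before_irr.
Qed.

Lemma rank_inj : injective (rank v).
Proof.
move=> i j eq_rank; apply/eqP/negPn/negP => /ranked_before_total.
by case/orP=> /rank_lt; rewrite eq_rank ltnn.
Qed.

Lemma rank_ltn i : (rank v i < n)%N.
Proof.
rewrite -[X in (_ < X)%N]card_ord -cardsT; apply/proper_card/properP.
by split; [apply: subsetT | exists i; rewrite !inE ?ranked_before_irr].
Qed.

Definition topset k := [set i | (rank v i < k)%N].

Lemma card_topset k : #|topset k| = #|[set j : 'I_n | (j < k)%N]|.
Proof.
pose rk i := Ordinal (rank_ltn i).
have rk_inj : injective rk by move=> i j /(congr1 val) /rank_inj.
rewrite -(card_preimset [set j : 'I_n | (j < k)%N] rk_inj).
by apply: eq_card => i; rewrite !inE.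
Qed.

Lemma topset_dominant k i j :
  i \in topset k -> j \notin topset k -> `|v j| <= `|v i|.
Proof.
rewrite !inE -leqNgt => ik kj.
rewrite real_leNgt ?normr_real //; apply/negP => lt_ij.
have /rank_lt lt_ji : ranked_before v j i by rewrite /ranked_before lt_ij.
by have := ltn_trans lt_ji (leq_trans ik kj); rewrite ltnn.
Qed.

End Ranking.

Section SetSums.
Variables (R : numDomainType) (I : finType) (a : I -> R).

Lemma ler_sum_dominated (A C : {set I}) :
  #|C| = #|A| -> (forall i j, i \in A -> j \in C -> a j <= a i) ->
  \sum_(j in C) a j <= \sum_(i in A) a i.
Proof.
move=> eq_card le_CA; have [A0|A_gt0] := posnP #|A|.
  by rewrite (cards0_eq A0) (cards0_eq (etrans eq_card A0)) !big_set0.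
have : (\sum_(j in C) a j) *+ #|A| <= (\sum_(i in A) a i) *+ #|C|.
  rewrite -sumr_const -sumrMnl; apply: ler_sum => i iA.
  by rewrite -sumr_const; apply: ler_sum => j jC; apply: le_CA.
by rewrite eq_card lerMn2r eqn0Ngt A_gt0.
Qed.

Lemma ler_sum_dominant_set (S T : {set I}) :
  #|T| = #|S| -> (forall i j, i \in S -> j \notin S -> a j <= a i) ->
  \sum_(i in T) a i <= \sum_(i in S) a i.
Proof.
move=> eq_card le_S; rewrite (big_setID S) [X in _ <= X](big_setID T) setIC lerD2l.
apply: ler_sum_dominated => [|i j]; first by rewrite !cardsD eq_card setIC.
by rewrite !inE => /andP[_ iS] /andP[jS _]; apply: le_S.
Qed.

End SetSums.

Section TopsetSums.
Variables (R : numDomainType) (n : nat).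
Implicit Types (v w x y : 'I_n -> R) (S : {set 'I_n}).

Lemma ler_sum_topset v w k :
  \sum_(i in topset w k) `|v i| <= \sum_(i in topset v k) `|v i|.
Proof.
apply: ler_sum_dominant_set => [|i j]; first by rewrite !card_topset.
exact: topset_dominant.
Qed.

Lemma ler_sum_norm_dist x y S :
  \sum_(i in S) `|x i| <= \sum_(i in S) `|y i| + \sum_i `|x i - y i|.
Proof.
apply: (le_trans (y := \sum_(i in S) (`|y i| + `|x i - y i|))).
  by apply: ler_sum => i _; have := ler_normD (y i) (x i - y i); rewrite subrKC.
rewrite big_split lerD2l /= [X in _ <= X](bigID [in S]) /= lerDl.
by apply: sumr_ge0.
Qed.

Lemma sum_topset_norm_sub_le x y k :
  \sum_(i in topset x k) `|x i| - \sum_(i in topset y k) `|x i|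
  <= 2 * \sum_i `|x i - y i|.
Proof.
set D := \sum_i `|x i - y i|.
have D_sym : D = \sum_i `|y i - x i| by apply: eq_bigr => i _; rewrite distrC.
rewrite lerBlDl mulr_natl mulr2n addrA.
apply: le_trans (ler_sum_norm_dist x y _) _; rewrite lerD2r.
apply: le_trans (ler_sum_topset y x k) _.
by rewrite D_sym; apply: ler_sum_norm_dist.
Qed.

End TopsetSums.

Lemma sum_bcoord (V : nmodType) B (d : 'I_B -> nat) (G : bcoord d -> V) :
  \sum_(p : bcoord d) G p = \sum_(k < B) \sum_(i < d k) G (Tagged (fun k => 'I_(d k)) i).
Proof. by rewrite sig_big_dep; apply: eq_bigr => -[k i]. Qed.

Lemma norm1_hadamard_FLT (R : archiRealFieldType) (alpha : R) B (d : 'I_B -> nat)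
    (x z : bcoord d -> R) :
  norm1 (hadamard x (FLT alpha z)) =
  \sum_(k < B) \sum_(i in topset (block z k) (nkeep alpha (d k))) `|block x k i|.
Proof.
rewrite /norm1 sum_bcoord; apply: eq_bigr => k _; rewrite [RHS]big_mkcond.
apply: eq_bigr => i _; rewrite /hadamard /FLT inE /=.
by case: (_ < _)%N; rewrite ?mulr1 ?mulr0 ?normr0.
Qed.

Theorem lemma1 (R : archiRealFieldType) (B : nat) (d : 'I_B -> nat) (alpha : R)
  (halpha0 : 0 < alpha) (halpha1 : alpha <= 1) (x y : bcoord d -> R) :
  norm1 (hadamard x (FLT alpha x)) - norm1 (hadamard x (FLT alpha y))
  <= 2 * norm1 (fun p => x p - y p).
Proof.
rewrite !norm1_hadamard_FLT /norm1 sum_bcoord -sumrB mulr_sumr.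
by apply: ler_sum => k _; apply: sum_topset_norm_sub_le.
Qed.
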